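(* Let $G$ be a graph of maximum degree at most $3$, and let $S\subseteq V(G)$. If $u$ is a vertex of degree at most $2$ in $G$, then $w_{(G,S)}(u)\leq 2$. Moreover, $w_{(G,S)}(u)=2$ if and only if $u$ is contained in a subgraph $T$ of $G$ that is a tree such that rooting $T$ in $u$ yields a full binary tree and $S\cap V(T)$ is exactly the set of leaves of $T$.
   Context: All graphs are finite, simple and undirected. For a graph $G$, a set $S\subseteq V(G)$, and vertices $u,v$ with $u\in S$ or $v\in S$, ${\rm dist}_{(G,S)}(u,v)$ is the minimum number of edges of a path $P$ in $G$ between $u$ and $v$ such that $S$ contains exactly one endvertex of $P$ and no internal vertex of $P$, and ${\rm dist}_{(G,S)}(u,v)=\infty$ if no such path exists (so ${\rm dist}_{(G,S)}(u,u)=0$ for $u\in S$, and ${\rm dist}_{(G,S)}(u,v)=\infty$ for distinct $u,v\in S$). For $u\in V(G)$, $w_{(G,S)}(u)=\sum_{v\in S}(1/2)^{{\rm dist}_{(G,S)}(u,v)-1}$, where $(1/2)^{\infty}=0$. A rooted tree is a full binary tree if every non-leaf vertex has exactly two children; a leaf of a rooted tree is a vertex with no children. *)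

From HB Require Import structures.
From mathcomp Require Import all_boot all_order all_algebra.
Set Implicit Arguments. Unset Strict Implicit. Unset Printing Implicit Defensive.
Import Order.TTheory GRing.Theory Num.Theory.

(* A finite simple graph is given by a vertex type T : finType and a
   symmetric irreflexive adjacency relation e : rel T. *)

Section Defs.
Variable T : finType.
Variable e : rel T.

Definition deg (x : T) : nat := #|[set y | e x y]|.

(* A path P from u to v is encoded by its vertex list u :: q
   (so its number of edges is size q). *)
Definition Spath (S : {set T}) (u v : T) (q : seq T) : bool :=
  [&& path e u q, last u q == v, uniq (u :: q),
      #|[set u; v] :&: S| == 1 &
      all (fun x => x \notin S) (take (size q).-1 q)].

Definition has_Spath (S : {set T}) (u v : T) (k : nat) : bool :=
  [exists q : k.-tuple T, Spath S u v q].

(* dist_(G,S)(u,v) : Some d for a finite distance d, None for infinity.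
   Simple paths have fewer than #|T| edges, so searching the lengths
   0 .. #|T| finds the minimum whenever an S-path exists. *)
Definition distS (S : {set T}) (u v : T) : option nat :=
  let d := find (has_Spath S u v) (iota 0 #|T|.+1) in
  if d <= #|T| then Some d else None.

Definition wterm (S : {set T}) (u v : T) : rat :=
  match distS S u v with
  | Some d => (2%:R^-1 : rat) ^ (d%:Z - 1)
  | None => 0
  end.

Definition weight (S : {set T}) (u : T) : rat := (\sum_(v in S) wterm S u v)%R.

Inductive btree : Type :=
| BLeaf of T
| BNode of T & btree & btree.

Definition broot (t : btree) : T :=
  match t with BLeaf x => x | BNode x _ _ => x end.

Fixpoint blabels (t : btree) : seq T :=
  match t with
  | BLeaf x => [:: x]
  | BNode x l r => x :: (blabels l ++ blabels r)
  end.

Fixpoint bleaves (t : btree) : seq T :=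
  match t with
  | BLeaf x => [:: x]
  | BNode _ l r => bleaves l ++ bleaves r
  end.

Fixpoint bwf (t : btree) : bool :=
  match t with
  | BLeaf _ => true
  | BNode x l r => [&& e x (broot l), e x (broot r), bwf l & bwf r]
  end.

(* t (with injective labelling) is a subgraph of G that is a tree, rooted
   at u it is a full binary tree, and S meets its vertex set exactly in its
   set of leaves. *)
Definition full_binary_subtree_at (S : {set T}) (u : T) (t : btree) : Prop :=
  [/\ broot t = u, bwf t, uniq (blabels t) &
      [set x in blabels t] :&: S = [set x in bleaves t]].

End Defs.

From HB Require Import structures.
From mathcomp Require Import all_boot all_order all_algebra.
From mathcomp Require Import lra zify.
Import Order.TTheory GRing.Theory Num.Theory.
Set Implicit Arguments. Unset Strict Implicit. Unset Printing Implicit Defensive.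

(* Let u be outside S.  A shortest S-path from u starts with an edge ux and
   continues as an S-path from x, one edge shorter, in the graph G - u obtained
   by isolating u; hence w(u) <= 1/2 * sum_{x ~ u} w'(x), where w' is the weight
   in G - u.  There the neighbours of u have degree at most 2, so by induction on
   the number of edges w'(x) <= 2 and w(u) <= deg(u) <= 2.  If w(u) = 2, all these
   inequalities are tight: u has two neighbours x1, x2 of weight 2 in G - u, which
   by induction root full binary trees T1, T2, and no vertex of S is at finite
   distance from both, so T1 and T2 are disjoint and hang from u.  Conversely,
   in such a tree every internal vertex receives at least half of the weight its
   children get from their leaves, so the leaves alone give w(u) >= 2. *)

Section Seq.
Variable T : eqType.

Lemma take_size_cons (y : T) s : take (size s) (y :: s) = belast y s.
Proof. by elim: s y => [|z s IHs] y //=; rewrite IHs. Qed.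

Lemma mem_belast_neq_last (x z : T) s :
  uniq (x :: s) -> z \in belast x s -> z != last x s.
Proof.
rewrite lastI rcons_uniq => /andP[last_notin _] z_in.
by apply: contraNneq last_notin => <-.
Qed.

Lemma mem_belast_of_neq_last (x z : T) s :
  z \in x :: s -> z != last x s -> z \in belast x s.
Proof. by rewrite lastI mem_rcons in_cons => /orP[/eqP->|//]; rewrite eqxx. Qed.

End Seq.

Section SPaths.
Variables (T : finType) (e : rel T) (S : {set T}).
Implicit Types (u v x y : T) (q : seq T).

Lemma card_pairIS_eq1 a v : v \in S ->
  (#|[set a; v] :&: S| == 1%N) = (a == v) || (a \notin S).
Proof.
move=> vS; have [->|a_neq_v] := eqVneq a v.
  by rewrite setUid (setIidPl _) ?sub1set ?cards1.
case: (boolP (a \in S)) => aS /=.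
  rewrite (setIidPl _) ?cards2 ?a_neq_v //.
  by apply/subsetP => z; rewrite !inE => /orP[]/eqP->; rewrite ?aS ?vS.
suff -> : [set a; v] :&: S = [set v] by rewrite cards1.
apply/setP => z; rewrite !inE; have [->|_] := eqVneq z a.
  by rewrite (negbTE aS) (negbTE a_neq_v).
by case: eqP => [->|]; rewrite ?vS.
Qed.

(* With v in S, "exactly one endvertex in S" just says that a = v or a avoids S. *)
Lemma SpathE a v q : v \in S ->
  Spath e S a v q =
  [&& path e a q, last a q == v, uniq (a :: q)
    & all (fun z => z \notin S) (belast a q)].
Proof.
move=> vS; rewrite /Spath card_pairIS_eq1 //.
case: q => [|y q] /=; first by case: eqP => //= ->; rewrite eqxx.
rewrite take_size_cons; case last_v: (last y q == v) => //=.
case: (boolP (a \in y :: q)) => //= a_notin.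
suff /negbTE-> : a != v by [].
by apply: contraNneq a_notin => ->; rewrite -(eqP last_v) mem_last.
Qed.

Lemma distS_le u v q : Spath e S u v q ->
  exists2 d, distS e S u v = Some d & (d <= size q)%N.
Proof.
move=> uvq; rewrite /distS; set d := find _ _.
have has_q : has_Spath e S u v (size q) by apply/existsP; exists (in_tuple q).
have q_lt : (size q < #|T|)%N.
  case/and5P: uvq => _ _ uniq_q _ _.
  by have := card_uniqP uniq_q; rewrite /= => <-; apply: max_card.
have d_le : (d <= size q)%N.
  rewrite leqNgt; apply/negP => /(before_find 0).
  by rewrite nth_iota ?add0n ?has_q //; lia.
by exists d; rewrite // ifT //; lia.
Qed.

Lemma distS_SomeP u v d : distS e S u v = Some d ->
  exists2 q, Spath e S u v q & size q = d.
Proof.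
rewrite /distS; set s := iota 0 #|T|.+1; case: ifP => // d_le [<-] {d}.
have d_lt : (find (has_Spath e S u v) s < #|T|.+1)%N by [].
have : has (has_Spath e S u v) s by rewrite has_find size_iota.
move=> /(nth_find 0); rewrite nth_iota // add0n => /existsP[q uvq].
by exists q; rewrite ?size_tuple.
Qed.

Definition half : rat := 2%:R^-1.

Lemma wtermE u v : wterm e S u v =
  if distS e S u v is Some d then (2 * half ^+ d)%R else 0%R.
Proof.
rewrite /wterm; case: distS => // d.
by rewrite expfzDr // exprN1 invrK mulrC.
Qed.

Lemma wterm_ge0 u v : (0 <= wterm e S u v)%R.
Proof. by rewrite wtermE; case: distS => // d; rewrite mulr_ge0 ?exprn_ge0. Qed.

Lemma wterm_ge_Spath u v q : Spath e S u v q ->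
  (2 * half ^+ size q <= wterm e S u v)%R.
Proof.
case/distS_le => d d_def d_le; rewrite wtermE d_def ler_pM2l //.
by apply: ler_wiXn2l.
Qed.

Lemma wterm_gt0_Spath u v : (0 < wterm e S u v)%R ->
  exists2 q, Spath e S u v q & wterm e S u v = (2 * half ^+ size q)%R.
Proof.
rewrite wtermE; case d_def: distS => [d|]; last by rewrite ltxx.
by case/distS_SomeP: d_def => q uvq <- _; exists q; rewrite // wtermE d_def.
Qed.

(* Shortening the walk to a simple path only drops vertices, which yields an
   S-path no longer than q. *)
Lemma wterm_ge_walk a q v : v \in S -> path e a q -> last a q = v ->
  all (fun z => z \notin S) (belast a q) -> (2 * half ^+ size q <= wterm e S a v)%R.
Proof.
move=> vS walk_q last_q /allP avoid_q.
move: (last_q); case: (shortenP walk_q) => p path_p uniq_p sub_p last_p.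
have p_le : (size p <= size q)%N by apply: uniq_leq_size; case/andP: uniq_p.
apply: le_trans (wterm_ge_Spath (q := p) _); first by rewrite ler_pM2l // ler_wiXn2l.
rewrite SpathE // path_p uniq_p last_p eqxx; apply/allP => z z_in; apply: avoid_q.
apply: mem_belast_of_neq_last; last by rewrite last_q -last_p; apply: mem_belast_neq_last z_in.
move: (mem_belast z_in); rewrite !in_cons => /orP[->//|/sub_p ->]; exact: orbT.
Qed.

Lemma wterm_gt0_walk a q v : v \in S -> path e a q -> last a q = v ->
  all (fun z => z \notin S) (belast a q) -> (0 < wterm e S a v)%R.
Proof.
move=> vS walk_q last_q avoid_q; apply: lt_le_trans (wterm_ge_walk vS walk_q last_q avoid_q).
by rewrite mulr_gt0 ?exprn_gt0.
Qed.

Lemma wterm_self u : u \in S -> wterm e S u u = 2%R.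
Proof.
move=> uS; have uu : Spath e S u u [::] by rewrite SpathE //= eqxx.
by case: (distS_le uu) => d; rewrite leqn0 wtermE => -> /eqP->; rewrite mulr1.
Qed.

Lemma wterm_SS u v : u \in S -> v \in S -> v != u -> wterm e S u v = 0%R.
Proof.
move=> uS vS v_neq_u; apply/eqP; rewrite eq_le wterm_ge0 andbT leNgt.
apply/negP => /wterm_gt0_Spath [[|y q] + _]; rewrite SpathE //=.
  by rewrite andbT eq_sym (negbTE v_neq_u).
by rewrite uS !andbF.
Qed.

Lemma weight_in_S u : u \in S -> weight e S u = 2%R.
Proof.
move=> uS; rewrite /weight (bigD1 u) //= wterm_self // big1 ?addr0 //.
by move=> v /andP[vS v_neq_u]; apply: wterm_SS.
Qed.

End SPaths.

Lemma ler_sum_eq (R : numDomainType) (I : finType) (P : pred I) (F G : I -> R) :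
  (forall i, P i -> F i <= G i)%R ->
  (\sum_(i | P i) G i <= \sum_(i | P i) F i)%R -> forall i, P i -> F i = G i.
Proof.
move=> FG sumGF i Pi; apply/eqP; rewrite eq_sym -subr_eq0; apply/eqP.
move: i Pi; apply: psumr_eq0P => [i /FG|]; first by rewrite subr_ge0.
rewrite sumrB; apply/eqP; rewrite eq_le subr_le0 sumGF subr_ge0 /=.
by apply: ler_sum.
Qed.

Section Isolate.
Variables (T : finType) (e : rel T).

Definition isolate (u : T) : rel T := [rel a b | [&& e a b, a != u & b != u]].

Definition arcs (r : rel T) : {set T * T} := [set p | r p.1 p.2].

Lemma sub_isolate u : subrel (isolate u) e.
Proof. by move=> a b /and3P[]. Qed.

Lemma isolate_sym u : symmetric e -> symmetric (isolate u).
Proof.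
by move=> e_sym a b; rewrite /isolate /= e_sym; case: (a != u); rewrite ?andbT ?andbF.
Qed.

Lemma isolate_irr u : irreflexive e -> irreflexive (isolate u).
Proof. by move=> e_irr a; rewrite /isolate /= e_irr. Qed.

Lemma deg_isolate u y : (deg (isolate u) y <= deg e y)%N.
Proof. by apply/subset_leq_card/subsetP => z; rewrite !inE => /and3P[]. Qed.

Lemma deg_isolate_nbr u x : symmetric e -> e u x -> (deg (isolate u) x < deg e x)%N.
Proof.
move=> e_sym eux; rewrite /deg (cardsD1 u [set y | e x y]) inE e_sym eux add1n ltnS.
by apply/subset_leq_card/subsetP => z; rewrite !inE => /and3P[-> _ ->].
Qed.

Lemma card_arcs_isolate u x : e u x -> (#|arcs (isolate u)| < #|arcs e|)%N.
Proof.
move=> eux; rewrite (cardsD1 (u, x) (arcs e)) inE eux add1n ltnS.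
apply/subset_leq_card/subsetP => -[a b]; rewrite !inE /= => /and3P[-> a_neq_u _].
by rewrite xpair_eqE (negbTE a_neq_u) andbT.
Qed.

End Isolate.

Section Weights.
Variables (T : finType) (e : rel T) (S : {set T}).

Lemma wterm_edge x y v : e x y -> x \notin S -> v \in S ->
  (half * wterm e S y v <= wterm e S x v)%R.
Proof.
move=> exy xS vS; case: (ltrP 0 (wterm e S y v)) => [/wterm_gt0_Spath[q yvq ->]|].
  move: yvq; rewrite SpathE // => /and4P[path_q /eqP last_q _ avoid_q].
  rewrite mulrCA -exprS; apply: (wterm_ge_walk (q := y :: q)) => //=.
  - by rewrite exy.
  - by rewrite xS.
by move=> wy_le0; apply: le_trans (wterm_ge0 e S x v); rewrite mulr_ge0_le0.
Qed.

(* A shortest S-path from u leaves u through some neighbour x and avoids u afterwards. *)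
Lemma wterm_le_nbr u v : u \notin S -> v \in S -> (0 < wterm e S u v)%R ->
  exists2 x, e u x & (wterm e S u v <= half * wterm (isolate e u) S x v)%R.
Proof.
move=> uS vS /wterm_gt0_Spath[[|x q]]; rewrite SpathE //=.
  by move=> /andP[/eqP uv]; rewrite -uv (negbTE uS) in vS.
move=> /and4P[/andP[eux path_q] last_q /andP[u_notin uniq_q] /andP[_ avoid_q]] ->.
exists x => //; rewrite exprS mulrCA ler_pM2l //.
apply: wterm_ge_walk => //; last exact/eqP.
apply: (sub_in_path (P := predC1 u)) _ _ path_q.
  by move=> a b; rewrite !inE /= => a_neq_u b_neq_u eab; rewrite /isolate /= eab a_neq_u.
by apply/allP => z z_in /=; apply: contraNneq u_notin => <-.
Qed.

Lemma wterm_le_nbr_sum u v : u \notin S -> v \in S ->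
  (wterm e S u v <= half * \sum_(x in [set y | e u y]) wterm (isolate e u) S x v)%R.
Proof.
move=> uS vS; case: (ltrP 0 (wterm e S u v)) => [/(wterm_le_nbr uS vS)[x eux]|].
  move/le_trans; apply; rewrite ler_pM2l // (bigD1 x) ?inE //= lerDl.
  by apply: sumr_ge0 => y _; apply: wterm_ge0.
by move/le_trans; apply; rewrite mulr_ge0 // sumr_ge0 // => y _; apply: wterm_ge0.
Qed.

Lemma weight_le_nbr_sum u : u \notin S ->
  (weight e S u <= half * \sum_(x in [set y | e u y]) weight (isolate e u) S x)%R.
Proof.
move=> uS; rewrite /weight [X in (_ <= half * X)%R]exchange_big mulr_sumr /=.
by apply: ler_sum => v vS; apply: wterm_le_nbr_sum.
Qed.

Lemma sum_wterm_le_weight u s : uniq s -> {subset s <= S} ->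
  (\sum_(v <- s) wterm e S u v <= weight e S u)%R.
Proof.
move=> uniq_s sS; rewrite big_uniq // /weight [X in (_ <= X)%R](bigID (mem s)) /=.
have -> : (\sum_(i in s) wterm e S u i = \sum_(i in S | i \in s) wterm e S u i)%R.
  by apply: eq_bigl => v; case: (boolP (v \in s)) => [/sS->|]; rewrite ?andbF.
by rewrite lerDl sumr_ge0 // => v _; apply: wterm_ge0.
Qed.

Lemma weight_le_deg u : u \notin S ->
  (forall x, e u x -> weight (isolate e u) S x <= 2)%R -> (weight e S u <= (deg e u)%:R)%R.
Proof.
move=> uS nbr_le2; apply: le_trans (weight_le_nbr_sum uS) _.
have : (\sum_(x in [set y | e u y]) weight (isolate e u) S x <= 2 * (deg e u)%:R)%R.
  by rewrite mulr_natr /deg -sumr_const; apply: ler_sum => x; rewrite inE; apply: nbr_le2.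
by rewrite /half; lra.
Qed.

(* Equality forces every inequality behind [weight_le_deg] to be tight. *)
Lemma weight_eq2_nbrs u : u \notin S -> (deg e u <= 2)%N ->
  (forall x, e u x -> weight (isolate e u) S x <= 2)%R -> weight e S u = 2%R ->
  exists x1 x2, [/\ e u x1, e u x2,
    weight (isolate e u) S x1 = 2%R, weight (isolate e u) S x2 = 2%R &
    forall v, v \in S ->
      wterm (isolate e u) S x1 v = 0%R \/ wterm (isolate e u) S x2 v = 0%R].
Proof.
move=> uS deg_u nbr_le2 wu2; set N := [set y | e u y].
pose a x v := wterm (isolate e u) S x v.
have /cards2P[x1 [x2 [x12 N_def]]] : #|N| == 2%N.
  have := weight_le_deg uS nbr_le2; rewrite wu2 (ler_nat rat 2) => deg_ge.
  by rewrite eqn_leq deg_u deg_ge.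
have sumN (F : T -> rat) : (\sum_(x in N) F x = F x1 + F x2)%R.
  by rewrite N_def big_setU1 ?inE // big_set1.
have [eux1 eux2] : e u x1 /\ e u x2.
  have N_mem : N =i [set x1; x2] by rewrite N_def.
  by have := N_mem x1; have := N_mem x2; rewrite !inE !eqxx orbT => -> ->.
have := weight_le_nbr_sum uS; rewrite wu2 -/N sumN.
have := nbr_le2 _ eux1; have := nbr_le2 _ eux2; rewrite /half => w2_le w1_le le_sum.
have w1 : weight (isolate e u) S x1 = 2%R by lra.
have w2 : weight (isolate e u) S x2 = 2%R by lra.
have tight v : v \in S -> wterm e S u v = (half * (a x1 v + a x2 v))%R.
  rewrite -(sumN (a^~ v)); move: v; apply: ler_sum_eq => [v|]; first exact: wterm_le_nbr_sum.
  rewrite -/(weight e S u) wu2 -mulr_sumr exchange_big /= sumN.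
  by change (half * (weight (isolate e u) S x1 + weight (isolate e u) S x2) <= 2)%R;
    rewrite w1 w2 /half; lra.
exists x1, x2; split=> // v vS; have := tight v vS.
have := wterm_ge0 (isolate e u) S x1 v; have := wterm_ge0 (isolate e u) S x2 v.
rewrite /a /half; case: (ltrP 0 (wterm e S u v)) => [/(wterm_le_nbr uS vS)[x eux]|].
  have : x \in N by rewrite inE.
  by rewrite N_def !inE /half => /orP[]/eqP-> ? ? ? ?; [right|left]; lra.
by move=> ? ? ? ?; left; lra.
Qed.

End Weights.


Lemma sum_wterm_edge (T : finType) (e : rel T) (S : {set T}) x y (s : seq T) :
  e x y -> x \notin S -> {subset s <= S} ->
  (half * \sum_(v <- s) wterm e S y v <= \sum_(v <- s) wterm e S x v)%R.
Proof.
move=> exy xS sS; rewrite mulr_sumr big_seq [X in (_ <= X)%R]big_seq.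
by apply: ler_sum => v /sS; apply: wterm_edge.
Qed.

Section Trees.
Variable T : finType.
Implicit Types (t : btree T) (e : rel T) (S : {set T}).

Fixpoint internals t : seq T :=
  if t is BNode x l r then x :: internals l ++ internals r else [::].

Definition marks_leaves S t : bool :=
  all (fun z => z \notin S) (internals t) && all (fun z => z \in S) (bleaves t).

Lemma perm_blabels t : perm_eq (blabels t) (internals t ++ bleaves t).
Proof.
elim: t => [x|x l IHl r IHr] //=.
by rewrite perm_cons perm_sym perm_catACA perm_sym perm_cat.
Qed.

Lemma broot_in_blabels t : broot t \in blabels t.
Proof. by case: t => [x|x l r]; rewrite mem_head. Qed.

Lemma bwf_sub e e' t : subrel e' e -> bwf e' t -> bwf e t.
Proof.
move=> e'e; elim: t => [x|x l IHl r IHr] //= /and4P[xl xr wf_l wf_r].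
by rewrite !e'e // IHl // IHr.
Qed.

Lemma isolate_notin_blabels e u t :
  bwf (isolate e u) t -> broot t != u -> u \notin blabels t.
Proof.
elim: t => [y|y l IHl r IHr] /=; first by rewrite inE eq_sym.
case/and4P=> /and3P[_ _ l_neq_u] /and3P[_ _ r_neq_u] wf_l wf_r y_neq_u.
by rewrite in_cons mem_cat negb_or eq_sym y_neq_u negb_or IHl // IHr.
Qed.

Lemma full_binary_subtree_atP e S u t : full_binary_subtree_at e S u t ->
  marks_leaves S t /\ uniq (bleaves t).
Proof.
case=> _ _ uniq_t S_leaves; have := uniq_t; rewrite (perm_uniq (perm_blabels t)).
rewrite cat_uniq => /and3P[_ /hasPn disj uniq_leaves]; split=> //.
have leafP z : z \in bleaves t -> z \in S.
  by move=> z_leaf; have := z_leaf; rewrite -[_ \in bleaves t]inE -S_leaves !inE => /andP[].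
apply/andP; split; apply/allP; last exact: leafP.
move=> z z_int; apply/negP => zS.
have : z \in [set x in blabels t] :&: S.
  by rewrite !inE zS (perm_mem (perm_blabels t)) mem_cat z_int.
by rewrite S_leaves inE => /disj; rewrite z_int.
Qed.

Section Walks.
Variables (e : rel T) (S : {set T}).

Lemma root_walk t y : bwf e t -> marks_leaves S t -> y \in blabels t ->
  exists q, [/\ path e (broot t) q, last (broot t) q = y &
                all (fun z => z \notin S) (belast (broot t) q)].
Proof.
elim: t => [x|x l IHl r IHr] /=; first by rewrite inE => _ _ /eqP->; exists [::].
case/and4P=> xl xr wf_l wf_r; rewrite /marks_leaves /= !all_cat.
case/andP=> /and3P[xS int_l int_r] /andP[leaves_l leaves_r].
rewrite in_cons mem_cat => /or3P[/eqP->|y_l|y_r]; first by exists [::].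
  have [|q [path_q <- avoid_q]] := IHl wf_l _ y_l; first exact/andP.
  by exists (broot l :: q); rewrite /= xl path_q xS avoid_q.
have [|q [path_q <- avoid_q]] := IHr wf_r _ y_r; first exact/andP.
by exists (broot r :: q); rewrite /= xr path_q xS avoid_q.
Qed.

Lemma leaf_walk t y : bwf e t -> marks_leaves S t -> y \in blabels t ->
  exists q, [/\ path e y q, last y q \in S, last y q \in blabels t &
                all (fun z => z \notin S) (belast y q)].
Proof.
elim: t y => [x|x l IHl r IHr] y /=.
  by rewrite inE /marks_leaves /= andbT => _ xS /eqP->; exists [::]; rewrite /= mem_head.
case/and4P=> xl xr wf_l wf_r; rewrite /marks_leaves /= !all_cat.
case/andP=> /and3P[xS int_l int_r] /andP[leaves_l leaves_r].
have marks_l : marks_leaves S l by apply/andP.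
have marks_r : marks_leaves S r by apply/andP.
rewrite in_cons mem_cat => /or3P[/eqP->|y_l|y_r].
- have [q [path_q qS q_l avoid_q]] := IHl _ wf_l marks_l (broot_in_blabels l).
  by exists (broot l :: q); rewrite /= xl path_q xS avoid_q qS in_cons mem_cat q_l orbT.
- have [q [path_q qS q_l avoid_q]] := IHl _ wf_l marks_l y_l.
  by exists q; rewrite in_cons mem_cat q_l orbT.
- have [q [path_q qS q_r avoid_q]] := IHr _ wf_r marks_r y_r.
  by exists q; rewrite in_cons mem_cat q_r !orbT.
Qed.

Lemma leaves_wterm_ge2 t : bwf e t -> marks_leaves S t ->
  (2 <= \sum_(v <- bleaves t) wterm e S (broot t) v)%R.
Proof.
elim: t => [x|x l IHl r IHr] /=.
  by rewrite /marks_leaves /= andbT => _ xS; rewrite big_seq1 wterm_self.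
case/and4P=> xl xr wf_l wf_r; rewrite /marks_leaves /= !all_cat.
case/andP=> /and3P[xS int_l int_r] /andP[leaves_l leaves_r].
have ge_l := IHl wf_l (introT andP (conj int_l leaves_l)).
have ge_r := IHr wf_r (introT andP (conj int_r leaves_r)).
have := sum_wterm_edge xl xS (fun v => allP leaves_l v).
have := sum_wterm_edge xr xS (fun v => allP leaves_r v).
by rewrite big_cat /= /half; lra.
Qed.

Lemma full_binary_subtree_weight_ge2 u t : full_binary_subtree_at e S u t ->
  (2 <= weight e S u)%R.
Proof.
move=> full_t; have [marks_t uniq_leaves] := full_binary_subtree_atP full_t.
case: full_t => <- wf_t _ _; apply: le_trans (leaves_wterm_ge2 wf_t marks_t) _.
by apply: sum_wterm_le_weight => //; case/andP: marks_t => _ /allP.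
Qed.

(* A common vertex of the two trees would give both roots a finite S-distance
   to the same leaf below it. *)
Lemma blabels_disjoint t1 t2 :
  bwf e t1 -> marks_leaves S t1 -> bwf e t2 -> marks_leaves S t2 ->
  (forall v, v \in S -> wterm e S (broot t1) v = 0%R \/ wterm e S (broot t2) v = 0%R) ->
  forall y, y \in blabels t1 -> y \notin blabels t2.
Proof.
move=> wf1 marks1 wf2 marks2 disj y y1; apply/negP => y2.
have [q2 [path_q2 vS v2 avoid_q2]] := leaf_walk wf2 marks2 y2.
have [q1 [path_q1 last_q1 avoid_q1]] := root_walk wf1 marks1 y1.
have [q3 [path_q3 last_q3 avoid_q3]] := root_walk wf2 marks2 v2.
have walk1 : (0 < wterm e S (broot t1) (last y q2))%R.
  apply: (wterm_gt0_walk (q := q1 ++ q2)) => //; first by rewrite cat_path path_q1 last_q1.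
    by rewrite last_cat last_q1.
  by rewrite belast_cat all_cat avoid_q1 last_q1.
have walk2 := wterm_gt0_walk vS path_q3 last_q3 avoid_q3.
by case: (disj _ vS) => wt0; [rewrite wt0 in walk1 | rewrite wt0 in walk2].
Qed.

End Walks.

Lemma full_binary_subtree_node e S u x1 x2 t1 t2 :
  irreflexive e -> u \notin S -> e u x1 -> e u x2 ->
  full_binary_subtree_at (isolate e u) S x1 t1 ->
  full_binary_subtree_at (isolate e u) S x2 t2 ->
  (forall y, y \in blabels t1 -> y \notin blabels t2) ->
  full_binary_subtree_at e S u (BNode u t1 t2).
Proof.
move=> e_irr uS eux1 eux2 [root1 wf1 uniq1 S1] [root2 wf2 uniq2 S2] disj.
have u_notin t x : e u x -> broot t = x -> bwf (isolate e u) t -> u \notin blabels t.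
  move=> eux root_t wf_t; apply: isolate_notin_blabels wf_t _.
  by rewrite root_t; apply: contraTneq eux => ->; rewrite e_irr.
split=> //=.
- by rewrite root1 root2 eux1 eux2 !(bwf_sub (@sub_isolate _ e u)).
- rewrite mem_cat negb_or (u_notin _ x1) ?(u_notin _ x2) // cat_uniq uniq1 uniq2 /=.
  by rewrite andbT; apply/hasPn => y y2; apply: contraL y2; apply: disj.
apply/setP => z; move/setP/(_ z): S1; move/setP/(_ z): S2; rewrite !inE !mem_cat.
by case: (eqVneq z u) => [->|_] /= <- <-; rewrite ?(negbTE uS) ?andbF // andb_orl.
Qed.

End Trees.

Section Main.
Variables (T : finType) (S : {set T}).

Definition weight_le2_tight (e : rel T) (u : T) : Prop :=
  (weight e S u <= 2)%R /\
  (weight e S u = 2%R -> exists t, full_binary_subtree_at e S u t).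

Lemma weight_le2_tight_step e u : irreflexive e -> (deg e u <= 2)%N ->
  (forall x, e u x -> weight_le2_tight (isolate e u) x) -> weight_le2_tight e u.
Proof.
move=> e_irr deg_u IH; case: (boolP (u \in S)) => uS.
  split=> [|_]; first by rewrite weight_in_S.
  exists (BLeaf u); split=> //; apply/setP => z.
  by rewrite !inE; case: eqP => // ->; rewrite uS.
have nbr_le2 x : e u x -> (weight (isolate e u) S x <= 2)%R by case/IH.
split=> [|/(weight_eq2_nbrs uS deg_u nbr_le2)[x1 [x2 [eux1 eux2 w1 w2 disj]]]].
  by apply: le_trans (weight_le_deg uS nbr_le2) _; rewrite ler_nat.
have [_ /(_ w1)[t1 full1]] := IH _ eux1; have [_ /(_ w2)[t2 full2]] := IH _ eux2.
have [[marks1 _] [marks2 _]] := (full_binary_subtree_atP full1, full_binary_subtree_atP full2).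
exists (BNode u t1 t2); apply: full_binary_subtree_node (full1) (full2) _ => //.
case: full1 full2 => root1 wf1 _ _ [root2 wf2 _ _].
by apply: (blabels_disjoint wf1 marks1 wf2 marks2); rewrite root1 root2.
Qed.

Lemma weight_le2_tight_subcubic n e : (#|arcs e| <= n)%N -> symmetric e -> irreflexive e ->
  (forall x, deg e x <= 3)%N -> forall u, (deg e u <= 2)%N -> weight_le2_tight e u.
Proof.
elim: n e => [|n IHn] e arcs_e e_sym e_irr maxdeg u deg_u;
  apply: weight_le2_tight_step => // x eux.
  by have := card_arcs_isolate eux; rewrite leqn0 in arcs_e; rewrite (eqP arcs_e).
apply: IHn.
- by rewrite -ltnS; apply: leq_trans (card_arcs_isolate eux) arcs_e.
- exact: isolate_sym.
- exact: isolate_irr.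
- by move=> y; apply: leq_trans (deg_isolate _ _ _) (maxdeg y).
- by rewrite -ltnS; apply: leq_trans (deg_isolate_nbr e_sym eux) (maxdeg x).
Qed.

End Main.

Theorem lemma1 (T : finType) (e : rel T) (e_sym : symmetric e)
  (e_irr : irreflexive e) (maxdeg : forall x : T, deg e x <= 3)
  (S : {set T}) (u : T) (deg_u : deg e u <= 2) :
  (weight e S u <= 2)%R /\
  (weight e S u = (2 : rat) <-> exists t : btree T, full_binary_subtree_at e S u t).
Proof.
have [le2 tree_of_eq2] := weight_le2_tight_subcubic S (leqnn _) e_sym e_irr maxdeg deg_u.
split=> //; split=> // -[t /full_binary_subtree_weight_ge2 ge2].
by apply/le_anti; rewrite le2 ge2.
Qed.
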